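(* Let $n=1$, let $U\subset\mathbb{R}$ be a connected open subset, and let $k$ be a positive integer with binary expansion $k=2^{\mu_r}+2^{\mu_{r-1}}+\cdots+2^{\mu_1}$, $\mu_r>\mu_{r-1}>\cdots>\mu_1\ge0$ integers; set $\mu=\mu_r$ (so $\mu+1$ is the number of binary digits of $k$ and $r$ is the number of digits equal to $1$). Then the Nash function $x\mapsto x^k$ on $U$ satisfies $\mathrm{LC}(x^k)\le \mu+r-1$.
   Context: For an open $U\subset\mathbb{R}^n$ with coordinates $x_1,\dots,x_n$, $\mathcal E(U)$ is the $\mathbb{R}$-algebra of $C^\infty$ functions on $U$, and $\mathcal N(U)$ the set of Nash functions on $U$ (real analytic $f$ on $U$ such that $P(x,f(x))=0$ on $U$ for some non-zero polynomial $P(x,y)$). Let $\mathfrak F$ be the free $\mathcal E(U)$-module on symbols $\mathbf d h$ ($h\in\mathcal E(U)$) and $\mathfrak R\subset\mathfrak F$ the submodule generated by the ''linearity generators'' $\mathbf d(h+k)-\mathbf d h-\mathbf d k$, $\mathbf d(\lambda\ell)-\lambda\mathbf d\ell$ ($\lambda\in\mathbb{R}$) and the ''Leibniz generators'' $\mathbf d(pq)-p\,\mathbf d q-q\,\mathbf d p$ ($h,k,\ell,p,q\in\mathcal E(U)$). For $f\in\mathcal N(U)$, the Leibniz complexity $\mathrm{LC}(f)$ is the minimum, over all $g\in\mathcal N(U)$ not identically zero and all ways of writing $g\big(\mathbf d f-\sum_{i=1}^n\frac{\partial f}{\partial x_i}\mathbf d x_i\big)\in\mathfrak F$ as an $\mathcal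 E(U)$-linear combination of generators of $\mathfrak R$, of the number of Leibniz generators used, where the generator $\mathbf d(1\cdot1)-1\,\mathbf d(1)-1\,\mathbf d(1)$ is not counted (so $\mathbf d c=0$ for constants $c\in\mathbb{R}$ may be used freely) and linearity generators are not counted. *)

From HB Require Import structures.
From mathcomp Require Import all_boot all_order all_algebra.
From mathcomp Require Import all_classical all_reals all_analysis.
Set Implicit Arguments. Unset Strict Implicit. Unset Printing Implicit Defensive.
Import Order.TTheory GRing.Theory Num.Theory.
Import numFieldNormedType.Exports.
Local Open Scope classical_set_scope.
Local Open Scope ring_scope.

Section LC.
Variable R : realType.

(* Elements of E(U) are represented by functions R -> R, two of them being
   identified when they agree on U. *)
Definition agree_on (U : set R) (f g : R -> R) : Prop := forall x, U x -> f x = g x.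

(* C^oo on the open set U: every iterated derivative is differentiable at every
   point of U (derivatives at points of an open U only depend on values on U). *)
Definition smooth_on (U : set R) (f : R -> R) : Prop :=
  forall (n : nat) (x : R), U x -> derivable (derive1n n f) x 1.

Definition analytic_on (U : set R) (f : R -> R) : Prop :=
  forall x0, U x0 -> exists (r : R) (a : nat -> R), 0 < r /\
    forall x, `|x - x0| < r ->
      ([series a n * (x - x0) ^+ n]_n) @ \oo --> f x.

(* evaluation of a bivariate polynomial P(x,y) : {poly {poly R}}
   (outer variable y, inner variable x) *)
Definition eval2 (P : {poly {poly R}}) (x y : R) : R :=
  (map_poly (fun c : {poly R} => c.[x]) P).[y].

Definition nash_on (U : set R) (f : R -> R) : Prop :=
  analytic_on U f /\
  exists P : {poly {poly R}}, P != 0 /\ forall x, U x -> eval2 P x (f x) = 0.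

(* Elements of the free E(U)-module F on the symbols  d h  are represented by
   finite formal sums: lists of pairs (coefficient, symbol). *)
Definition fsum := seq ((R -> R) * (R -> R)).

Definition coef_at (U : set R) (L : fsum) (s : R -> R) (x : R) : R :=
  \sum_(pr <- L) (if `[< agree_on U pr.2 s >] then pr.1 x else 0).

Definition feq (U : set R) (L1 L2 : fsum) : Prop :=
  forall s x, U x -> coef_at U L1 s x = coef_at U L2 s x.

Definition fscale (c : R -> R) (L : fsum) : fsum :=
  [seq (c \* pr.1, pr.2) | pr <- L].

(* generators of the relation submodule R *)
Inductive gen :=
  | GAdd of (R -> R) & (R -> R)
  | GScal of R & (R -> R)
  | GLeib of (R -> R) & (R -> R).

Definition gen_expand (G : gen) : fsum :=
  match G with
  | GAdd h k => [:: (cst 1, h \+ k); (cst (-1), h); (cst (-1), k)]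
  | GScal l h => [:: (cst 1, (fun x => l * h x)); (cst (- l), h)]
  | GLeib p q => [:: (cst 1, p \* q); (\- p, q); (\- q, p)]
  end.

Definition gen_smooth (U : set R) (G : gen) : Prop :=
  match G with
  | GAdd h k => smooth_on U h /\ smooth_on U k
  | GScal _ h => smooth_on U h
  | GLeib p q => smooth_on U p /\ smooth_on U q
  end.

Definition counted_leib (U : set R) (G : gen) : bool :=
  match G with
  | GLeib p q => ~~ `[< agree_on U p (cst 1) /\ agree_on U q (cst 1) >]
  | _ => false
  end.

Definition comb_expand (C : seq ((R -> R) * gen)) : fsum :=
  flatten [seq fscale cg.1 (gen_expand cg.2) | cg <- C].

Definition comb_ok (U : set R) (C : seq ((R -> R) * gen)) : Prop :=
  forall i, (i < size C)%N ->
    smooth_on U (nth (cst 0, GScal 0 id) C i).1 /\ gen_smooth U (nth (cst 0, GScal 0 id) C i).2.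

Definition n_leib (U : set R) (C : seq ((R -> R) * gen)) : nat :=
  count (fun cg => counted_leib U cg.2) C.

(* LC(f) <= m  (n = 1, coordinate x = id):  f is Nash and there are a Nash g,
   not identically zero on U, and a combination of generators with at most m
   counted Leibniz generators equal in F to  g (df - f' dx). *)
Definition LC_le (U : set R) (f : R -> R) (m : nat) : Prop :=
  nash_on U f /\
  exists (g : R -> R) (C : seq ((R -> R) * gen)),
    [/\ nash_on U g, (exists2 x, U x & g x != 0), comb_ok U C,
        (n_leib U C <= m)%N &
        feq U (comb_expand C) [:: (g, f); (\- (g \* derive1 f), id)]].

End LC.

From HB Require Import structures.
From mathcomp Require Import all_boot all_order all_algebra.
From mathcomp Require Import all_classical all_reals all_analysis.
From mathcomp Require Import ring zify.
Set Implicit Arguments. Unset Strict Implicit. Unset Printing Implicit Defensive.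
Import Order.TTheory GRing.Theory Num.Theory.
Import numFieldNormedType.Exports.
Local Open Scope classical_set_scope.
Local Open Scope ring_scope.

(* Square-and-multiply along the binary expansion of k: starting from x, each
   of the mu lower digits costs one squaring x^(2a) = x^a x^a, and each of the
   r - 1 lower digits equal to 1 one further multiplication x^(a+1) = x^a x.
   Each product p q is one Leibniz generator, and if a combination C represents
   d(x^a) - a x^(a-1) dx, then that generator together with C scaled by a
   monomial represents the same relation for the product.  So g = 1 works, with
   polynomial (hence smooth) coefficients throughout. *)

Section LeibnizPowers.
Variable R : realType.
Variable U : set R.

Local Notation mon a := (fun y : R => y ^+ a).

Definition sym_ind (h s : R -> R) : R := if `[< agree_on U h s >] then 1 else 0.

Lemma coef_at_nil s x : coef_at U [::] s x = 0.
Proof. by rewrite /coef_at big_nil. Qed.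

Lemma coef_at_cons (pr : (R -> R) * (R -> R)) L s x :
  coef_at U (pr :: L) s x = pr.1 x * sym_ind pr.2 s + coef_at U L s x.
Proof. by rewrite /coef_at /sym_ind big_cons; case: ifP; rewrite ?mulr1 ?mulr0. Qed.

Lemma coef_at_cat L1 L2 s x :
  coef_at U (L1 ++ L2) s x = coef_at U L1 s x + coef_at U L2 s x.
Proof. by rewrite /coef_at big_cat. Qed.

Lemma coef_at_fscale c L s x : coef_at U (fscale c L) s x = c x * coef_at U L s x.
Proof.
rewrite /coef_at /fscale big_map mulr_sumr; apply: eq_bigr => pr _ /=.
by case: ifP; rewrite ?mulr0.
Qed.

Lemma coef_at_leib p q s x :
  coef_at U (gen_expand (GLeib p q)) s x =
  sym_ind (p \* q) s - p x * sym_ind q s - q x * sym_ind p s.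
Proof. by rewrite /= !coef_at_cons coef_at_nil /cst /=; ring. Qed.

Definition comb_coef (C : seq ((R -> R) * gen R)) s x := coef_at U (comb_expand C) s x.

Definition comb_scale (d : R -> R) (C : seq ((R -> R) * gen R)) :=
  [seq (d \* cg.1, cg.2) | cg <- C].

Lemma comb_coef_cons c G C s x :
  comb_coef ((c, G) :: C) s x = c x * coef_at U (gen_expand G) s x + comb_coef C s x.
Proof. by rewrite /comb_coef /comb_expand /= coef_at_cat coef_at_fscale. Qed.

Lemma comb_coef_scale d C s x : comb_coef (comb_scale d C) s x = d x * comb_coef C s x.
Proof.
elim: C => [|[c G] C IH]; first by rewrite /comb_coef /= coef_at_nil mulr0.
by rewrite /comb_scale map_cons !comb_coef_cons -/(comb_scale d C) IH /= mulrDr mulrA.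
Qed.

Lemma n_leib_cons cg C : (n_leib U (cg :: C) <= (n_leib U C).+1)%N.
Proof. by rewrite /n_leib /= addnC -addn1 leq_add2l leq_b1. Qed.

Lemma n_leib_scale d C : n_leib U (comb_scale d C) = n_leib U C.
Proof. by rewrite /n_leib /comb_scale count_map. Qed.

Definition represents_dmon (a : nat) C := forall s x, U x ->
  comb_coef C s x = sym_ind (mon a) s - sym_ind id s * (a%:R * x ^+ a.-1).

Lemma mulr_expr_derivX (x : R) a b :
  x ^+ b * (a%:R * x ^+ a.-1) = a%:R * x ^+ (b + a).-1.
Proof. by case: a => [|a]; rewrite ?mul0r ?mulr0 // addnS /= mulrCA -exprD. Qed.

Lemma represents_dmon1 : represents_dmon 1 [::].
Proof.
move=> s x _; rewrite /comb_coef coef_at_nil expr0 mulr1.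
have -> : mon 1 = id by apply/funext => y; rewrite expr1.
by rewrite mulr1 subrr.
Qed.

Lemma represents_dmon_sqr a C : represents_dmon a C ->
  represents_dmon a.*2 ((cst 1, GLeib (mon a) (mon a)) :: comb_scale (cst 2 \* mon a) C).
Proof.
move=> HC s x Ux; rewrite comb_coef_cons comb_coef_scale coef_at_leib HC //.
have -> : mon a \* mon a = mon a.*2 by apply/funext => y; rewrite /= -exprD addnn.
rewrite -addnn natrD mulrDl -(mulr_expr_derivX x a a) /cst /=; ring.
Qed.

Lemma represents_dmon_mulX a C : represents_dmon a C ->
  represents_dmon a.+1 ((cst 1, GLeib (mon a) id) :: comb_scale id C).
Proof.
move=> HC s x Ux; rewrite comb_coef_cons comb_coef_scale coef_at_leib HC //.
have -> : mon a \* id = mon a.+1 by apply/funext => y; rewrite /= exprSr.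
have e := mulr_expr_derivX x a 1; rewrite expr1 add1n /= in e.
by rewrite /= -natr1 mulrDl mul1r -e /cst /=; ring.
Qed.

Definition polynomial_fun (f : R -> R) := exists p : {poly R}, f = horner p.

Lemma polynomial_fun_mul f g :
  polynomial_fun f -> polynomial_fun g -> polynomial_fun (f \* g).
Proof. by move=> [p ->] [q ->]; exists (p * q); apply/funext => y /=; rewrite hornerM. Qed.

Lemma polynomial_fun_cst c : polynomial_fun (cst c).
Proof. by exists c%:P; apply/funext => y; rewrite hornerC. Qed.

Lemma polynomial_fun_mon a : polynomial_fun (mon a).
Proof. by exists 'X^a; apply/funext => y; rewrite hornerXn. Qed.

Lemma polynomial_fun_id : polynomial_fun id.
Proof. by exists 'X; apply/funext => y; rewrite hornerX. Qed.

Lemma polynomial_fun_smooth f : polynomial_fun f -> smooth_on U f.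
Proof.
move=> [p ->] n x _; elim: n p => [|n IH] p; first exact: derivable_horner.
by rewrite /derive1n iterSr -derivE; apply: IH.
Qed.

Definition gen_poly (G : gen R) : Prop :=
  match G with
  | GAdd h k => polynomial_fun h /\ polynomial_fun k
  | GScal _ h => polynomial_fun h
  | GLeib p q => polynomial_fun p /\ polynomial_fun q
  end.

Fixpoint comb_poly (C : seq ((R -> R) * gen R)) : Prop :=
  if C is cg :: C' then [/\ polynomial_fun cg.1, gen_poly cg.2 & comb_poly C'] else True.

Lemma comb_poly_scale d C : polynomial_fun d -> comb_poly C -> comb_poly (comb_scale d C).
Proof.
move=> pd; elim: C => //= cg C IH [? ? ?].
by split; [apply: polynomial_fun_mul | | apply: IH].
Qed.

Lemma comb_poly_ok C : comb_poly C -> comb_ok U C.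
Proof.
elim: C => [|[c G] C IH] //= [pc pG pC] [_|i Hi] /=; last exact: IH.
split; first exact: polynomial_fun_smooth.
by case: G pG => /= [h k [? ?]|l h ?|p q [? ?]]; do ?split; apply: polynomial_fun_smooth.
Qed.

Definition dmon_leib_le a c :=
  exists C, [/\ represents_dmon a C, comb_poly C & (n_leib U C <= c)%N].

Lemma dmon_leib_le1 : dmon_leib_le 1 0.
Proof. by exists [::]; split => //; apply: represents_dmon1. Qed.

Lemma dmon_leib_le_sqr a c : dmon_leib_le a c -> dmon_leib_le a.*2 c.+1.
Proof.
move=> [C [/represents_dmon_sqr HC pC nC]]; eexists; split; first exact: HC.
  split; [exact: polynomial_fun_cst | split; exact: polynomial_fun_mon |].
  by apply: comb_poly_scale => //; apply: polynomial_fun_mul;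
    [apply: polynomial_fun_cst | apply: polynomial_fun_mon].
by apply: leq_trans (n_leib_cons _ _) _; rewrite n_leib_scale.
Qed.

Lemma dmon_leib_le_mulX a c : dmon_leib_le a c -> dmon_leib_le a.+1 c.+1.
Proof.
move=> [C [/represents_dmon_mulX HC pC nC]]; eexists; split; first exact: HC.
  split; [exact: polynomial_fun_cst | split; [apply: polynomial_fun_mon | apply: polynomial_fun_id] |].
  exact: comb_poly_scale polynomial_fun_id pC.
by apply: leq_trans (n_leib_cons _ _) _; rewrite n_leib_scale.
Qed.

Lemma dmon_leib_le_pow2 a c j : dmon_leib_le a c -> dmon_leib_le (a * 2 ^ j) (c + j).
Proof.
move=> H; elim: j => [|j IH]; first by rewrite muln1 addn0.
by rewrite expnS mulnCA mul2n addnS; apply: dmon_leib_le_sqr.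
Qed.

Lemma dmon_leib_le_binary (mus : seq nat) a c t :
  dmon_leib_le a c -> path (fun a b : nat => (b < a)%N) t mus ->
  dmon_leib_le (a * 2 ^ t + \sum_(m <- mus) 2 ^ m) (c + t + size mus).
Proof.
elim: mus a c t => [|m mus IH] a c t Hac /=.
  by rewrite big_nil !addn0 => _; apply: dmon_leib_le_pow2.
move=> /andP[mt Hpath].
have := IH _ _ m (dmon_leib_le_mulX (dmon_leib_le_pow2 (t - m) Hac)) Hpath.
have -> : ((a * 2 ^ (t - m)).+1 * 2 ^ m = a * 2 ^ t + 2 ^ m)%N.
  by rewrite mulSn addnC -mulnA -expnD subnK // ltnW.
have -> : ((c + (t - m)).+1 + m + size mus = c + t + (size mus).+1)%N by lia.
by rewrite big_cons addnA.
Qed.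

Lemma analytic_on_mon k : analytic_on U (mon k).
Proof.
move=> x0 _; exists 1, (fun i => 'C(k, i)%:R * x0 ^+ (k - i)); split => // x _.
apply: cvg_near_cst; exists k.+1 => // n /= Hn.
rewrite /series /= (@big_cat_nat _ _ _ k.+1 0 n) //=.
rewrite [X in _ + X]big_nat_cond [X in _ + X]big1 ?addr0; last first.
  by move=> i /andP[/andP[Hi _] _]; rewrite bin_small // !mul0r.
rewrite -{2}(subrK x0 x) (addrC (x - x0)) exprDn big_mkord; apply: eq_bigr => i _.
by rewrite -mulr_natl; ring.
Qed.

Lemma nash_on_mon k : nash_on U (mon k).
Proof.
split; first exact: analytic_on_mon.
exists ('X - ('X^k)%:P); split; first exact: monic_neq0 (monicXsubC _).
move=> x _; rewrite /eval2 (_ : (fun c : {poly R} => c.[x]) = horner_eval x) //.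
by rewrite map_polyXsubC /= hornerXsubC horner_evalE hornerXn subrr.
Qed.

Lemma LC_le_mon k c : U !=set0 -> dmon_leib_le k c -> LC_le U (mon k) c.
Proof.
move=> [x0 Ux0] [C [HC pC nC]]; split; first exact: nash_on_mon.
exists (mon 0), C; split => //; first exact: nash_on_mon.
- by exists x0 => //; rewrite expr0 oner_neq0.
- exact: comb_poly_ok.
- move=> s x Ux; rewrite -/(comb_coef C s x) HC // !coef_at_cons coef_at_nil.
  by rewrite /= exp_derive1 expr0 /GRing.scale /=; ring.
Qed.

End LeibnizPowers.

Theorem lemma3p4 (R : realType) (U : set R) (k : nat) (mus : seq nat) :
  open U -> connected U -> U !=set0 ->
  (0 < k)%N ->
  sorted (fun a b : nat => (b < a)%N) mus ->
  k = (\sum_(m <- mus) 2 ^ m)%N ->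
  LC_le U (fun x : R => x ^+ k) (head 0%N mus + size mus - 1)%N.
Proof.
move=> _ _ U0 k0 + Hk; case: mus Hk => [|mu rest] Hk Hpath.
  by rewrite Hk big_nil in k0.
apply: LC_le_mon => //.
have := dmon_leib_le_binary (dmon_leib_le1 U) Hpath.
by rewrite Hk big_cons mul1n add0n /= addnS subn1.
Qed.
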